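(* Let $R$ be an arithmetic ring, $M$ a finitely generated $R$-module, and $\{0\}=M_0\subset M_1\subset\dots\subset M_n=M$ a pure-composition series of $M$ with $M_i/M_{i-1}=R(x_i+M_{i-1})$ for $1\le i\le n$, whose annihilator sequence $(A_i)_{1\le i\le n}$, $A_i=\mathrm{ann}(M_i/M_{i-1})$, is increasing ($A_1\subseteq\dots\subseteq A_n$). If $c_1,\dots,c_n\in R$ satisfy $\sum_{i=1}^n c_ix_i=0$, then $c_i\in A_n$ for every $i$.
   Context: All rings are commutative with identity. $R$ is arithmetic if $R_P$ is a valuation ring for every maximal ideal $P$. A submodule is pure if its inclusion stays injective after tensoring with any module; a pure-composition series is a finite chain of pure submodules from $0$ to $M$. *)

From mathcomp Require Import all_boot all_order all_algebra.
Set Implicit Arguments. Unset Strict Implicit. Unset Printing Implicit Defensive.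
Import GRing.Theory.
Local Open Scope ring_scope.

Section Defs.
Variable R : comPzRingType.

Definition is_ideal (I : R -> Prop) : Prop :=
  [/\ I 0, (forall a b, I a -> I b -> I (a + b)) & (forall r a, I a -> I (r * a))].

Definition is_maximal_ideal (P : R -> Prop) : Prop :=
  [/\ is_ideal P, ~ P 1 &
      forall J, is_ideal J -> (forall a, P a -> J a) -> J 1 \/ (forall a, J a -> P a)].

(** R_P is a valuation ring (= chain ring: its (principal) ideals are totally
    ordered).  Unfolded in terms of R: for a, b in R, a/1 divides b/1 in R_P
    iff s*b = r*a for some r in R and s notin P. *)
Definition local_valuation (P : R -> Prop) : Prop :=
  forall a b : R, exists s r : R, ~ P s /\ (s * b = r * a \/ s * a = r * b).

Definition arithmetic : Prop :=
  forall P, is_maximal_ideal P -> local_valuation P.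

Variable M : lmodType R.

Definition fin_gen : Prop :=
  exists s : seq M, forall m : M, exists r : 'I_(size s) -> R,
    m = \sum_(i < size s) r i *: s`_i.

Definition submod (N : M -> Prop) : Prop :=
  [/\ N 0, (forall x y, N x -> N y -> N (x + y)) & (forall r x, N x -> N (r *: x))].

(** Tensor products, presented as the free abelian group on pairs modulo the
    bilinearity/balancing relations. For a submodule N of M (given by a
    predicate), an element sum_i n_i (x) a_i of N (x)_R A is represented by a
    list of pairs (n_i, a_i) with n_i in N. *)
Inductive tgen (A : lmodType R) :=
  | TG_addl of M & M & A
  | TG_addr of M & A & A
  | TG_scal of R & M & A.

Definition tgen_expand (A : lmodType R) (g : tgen A) : seq (int * (M * A)) :=
  match g with
  | TG_addl x x' a => [:: (1%Z, (x + x', a)); ((-1)%Z, (x, a)); ((-1)%Z, (x', a))]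
  | TG_addr x a a' => [:: (1%Z, (x, a + a')); ((-1)%Z, (x, a)); ((-1)%Z, (x, a'))]
  | TG_scal r x a => [:: (1%Z, (r *: x, a)); ((-1)%Z, (x, r *: a))]
  end.

Definition tgen_in (A : lmodType R) (N : M -> Prop) (g : tgen A) : Prop :=
  match g with
  | TG_addl x x' _ => N x /\ N x'
  | TG_addr x _ _ => N x
  | TG_scal _ x _ => N x
  end.

Fixpoint all_Prop (T : Type) (P : T -> Prop) (s : seq T) : Prop :=
  if s is a :: s' then P a /\ all_Prop P s' else True.

Definition fcoef (T : eqType) (s : seq (int * T)) (p : T) : int :=
  \sum_(q <- s | q.2 == p) q.1.

(** sum_i n_i (x) a_i = 0 in N (x)_R A *)
Definition tensor_zero (A : lmodType R) (N : M -> Prop) (s : seq (M * A)) : Prop :=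
  exists gs : seq (int * tgen A),
    all_Prop (fun g => tgen_in N g.2) gs /\
    forall p : M * A,
      fcoef [seq (1%Z, q) | q <- s] p = \sum_(g <- gs) g.1 * fcoef (tgen_expand g.2) p.

(** N is pure in M: N (x) A -> M (x) A is injective for every R-module A. *)
Definition pure (N : M -> Prop) : Prop :=
  forall (A : lmodType R) (s : seq (M * A)),
    (forall q, q \in s -> N q.1) ->
    tensor_zero (fun _ => True) s -> tensor_zero N s.

Definition pure_comp_series (Ms : nat -> M -> Prop) (n : nat) : Prop :=
  [/\ (forall m, Ms 0%N m <-> m = 0),
      (forall m, Ms n m),
      (forall i, (i < n)%N -> forall m, Ms i m -> Ms i.+1 m) &
      (forall i, (i <= n)%N -> submod (Ms i) /\ pure (Ms i))].

Definition cyclic_quot (N N' : M -> Prop) (x : M) : Prop :=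
  N' x /\ forall m, N' m -> exists r : R, N (m - r *: x).

Definition ann_quot (N N' : M -> Prop) (r : R) : Prop :=
  forall m, N' m -> N (r *: m).

End Defs.

(** From [sum_(i<=k+1) c_i x_i = 0]
    we get [c_(k+1) x_(k+1) ∈ M_k], so [c_(k+1) ∈ A_(k+1)], and
    [c_(k+1) x_(k+1) = c_(k+1) u] with [u = sum_(i<=k) r_i x_i ∈ M_k].  Then
    [sum_(i<=k) (c_i + c_(k+1) r_i) x_i = 0], so by induction
    [c_i + c_(k+1) r_i ∈ A_k ⊆ A_(k+1)], whence [c_i ∈ A_(k+1)]. *)

From HB Require Import structures.
From mathcomp Require Import all_boot all_order all_algebra.
From mathcomp Require Import generic_quotient ring_quotient boolp.
Set Implicit Arguments. Unset Strict Implicit.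
Import GRing.Theory.
Local Open Scope ring_scope.
Local Open Scope quotient_scope.

Section CyclicQuotient.
Variables (R : comPzRingType) (a : R).

Definition pideal : {pred R} := fun u => `[< exists r, u = a * r >].

Lemma pidealP u : reflect (exists r, u = a * r) (u \in pideal).
Proof. exact: asboolP. Qed.

Lemma pideal_zmod_closed : zmod_closed pideal.
Proof.
split; first by apply/pidealP; exists 0; rewrite mulr0.
move=> u v /pidealP[r ->] /pidealP[s ->]; apply/pidealP; exists (r - s).
by rewrite mulrBr.
Qed.

HB.instance Definition _ := GRing.isZmodClosed.Build R pideal pideal_zmod_closed.

Lemma pidealM r u : u \in pideal -> r * u \in pideal.
Proof. by move=> /pidealP[t ->]; apply/pidealP; exists (r * t); rewrite mulrCA. Qed.

Definition quotR := Quotient.quot pideal.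
HB.instance Definition _ := GRing.Zmodule.on quotR.

Definition piq (u : R) : quotR := \pi_(Quotient.quot pideal) u.
Definition reprq (q : quotR) : R := repr (q : Quotient.quot pideal).

Lemma piqD u v : piq (u + v) = piq u + piq v.
Proof. exact: (raddfD (\pi_(Quotient.quot pideal))). Qed.

Lemma piq_eqE u v : piq u = piq v <-> u - v \in pideal.
Proof.
by rewrite (Quotient.idealrBE pideal); split => [h|/eqP h //]; apply/eqP.
Qed.

Lemma reprqK q : piq (reprq q) = q.
Proof. exact: reprK. Qed.

Lemma reprq_piq u : reprq (piq u) - u \in pideal.
Proof. by apply/piq_eqE; rewrite reprqK. Qed.

Definition scaleq (r : R) (q : quotR) : quotR := piq (r * reprq q).

Lemma scaleqA r s q : scaleq r (scaleq s q) = scaleq (r * s) q.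
Proof.
rewrite /scaleq; apply/piq_eqE; rewrite -mulrA -mulrBr.
exact/pidealM/reprq_piq.
Qed.

Lemma scaleq1 q : scaleq 1 q = q.
Proof. by rewrite /scaleq mul1r reprqK. Qed.

Lemma scaleqDr r p q : scaleq r (p + q) = scaleq r p + scaleq r q.
Proof.
rewrite /scaleq -piqD; apply/piq_eqE; rewrite -mulrDr -mulrBr; apply: pidealM.
by apply/piq_eqE; rewrite piqD !reprqK.
Qed.

Lemma scaleqDl q r s : scaleq (r + s) q = scaleq r q + scaleq s q.
Proof. by rewrite /scaleq -piqD mulrDl. Qed.

HB.instance Definition _ :=
  GRing.Zmodule_isLmodule.Build R quotR scaleqA scaleq1 scaleqDr scaleqDl.

Lemma scaleqE r q : r *: q = piq (r * reprq q). Proof. by []. Qed.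

Lemma scale_piq1 : a *: piq 1 = 0.
Proof.
rewrite scaleqE -(raddf0 (\pi_(Quotient.quot pideal))) -/(piq 0).
by apply/piq_eqE; rewrite subr0; apply/pidealP; exists (reprq (piq 1)).
Qed.

End CyclicQuotient.

Section FormalCombination.
Variables (T : eqType) (G : zmodType) (phi : T -> G).

Definition zeval (L : seq (int * T)) : G := \sum_(e <- L) phi e.2 *~ e.1.

Lemma zeval_fcoef L U : uniq U -> {subset map snd L <= U} ->
  zeval L = \sum_(p <- U) phi p *~ fcoef L p.
Proof.
move=> uU; elim: L => [|e L IH] sub.
  by rewrite /zeval big_nil big1 // => p _; rewrite /fcoef big_nil mulr0z.
have eU : e.2 \in U by apply: sub; rewrite inE eqxx.
rewrite /zeval big_cons -/(zeval L) IH; last first.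
  by move=> q hq; apply: sub; rewrite inE hq orbT.
rewrite (bigD1_seq e.2) //= [in RHS](bigD1_seq e.2) //=.
rewrite /fcoef big_cons eqxx mulrzDr addrA; congr (_ + _).
by apply: eq_bigr => p hp; rewrite big_cons eq_sym (negPf hp).
Qed.

Lemma zeval_lincomb L (gs : seq (int * seq (int * T))) :
  (forall p, fcoef L p = \sum_(g <- gs) g.1 * fcoef g.2 p) ->
  zeval L = \sum_(g <- gs) zeval g.2 *~ g.1.
Proof.
move=> coefL.
set U := undup (map snd L ++ flatten [seq map snd g.2 | g <- gs]).
have uU : uniq U by apply: undup_uniq.
rewrite (zeval_fcoef uU); last by move=> q hq; rewrite mem_undup mem_cat hq.
under eq_bigr do rewrite coefL mulrz_sumr.
rewrite exchange_big /=; apply: eq_big_seq => g gin.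
rewrite (zeval_fcoef uU); last first.
  by move=> q hq; rewrite mem_undup mem_cat; apply/orP; right; apply/flatten_mapP; exists g.
by rewrite mulrz_suml; apply: eq_bigr => p _; rewrite mulrzA_C.
Qed.

End FormalCombination.

Section Submodule.
Variables (R : comPzRingType) (M : lmodType R) (N : M -> Prop).
Hypothesis subN : submod N.

Lemma submod0 : N 0.
Proof. by case: subN. Qed.

Lemma submodD u v : N u -> N v -> N (u + v).
Proof. by case: subN => _ + _; apply. Qed.

Lemma submodZ r u : N u -> N (r *: u).
Proof. by case: subN => _ _; apply. Qed.

Lemma submodN u : N u -> N (- u).
Proof. by rewrite -scaleN1r; apply: submodZ. Qed.

Lemma submodMz u k : N u -> N (u *~ k).
Proof. by rewrite -scaler_int; apply: submodZ. Qed.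

Lemma submod_scale_image a : submod (fun v => exists2 u, N u & v = a *: u).
Proof.
split; first by exists 0; rewrite ?scaler0 //; apply: submod0.
  by move=> _ _ [u Nu ->] [w Nw ->]; exists (u + w); rewrite ?scalerDr //; apply: submodD.
by move=> r _ [u Nu ->]; exists (r *: u); [apply: submodZ | rewrite !scalerA mulrC].
Qed.

Lemma ann_quot_ideal (N' : M -> Prop) : is_ideal (ann_quot N N').
Proof.
split=> [m _|r s hr hs m hm|r s hs m hm].
- by rewrite scale0r; apply: submod0.
- by rewrite scalerDl; apply: submodD; [apply: hr | apply: hs].
- by rewrite -scalerA; apply/submodZ/hs.
Qed.

Lemma cyclic_quot_ann (N' : M -> Prop) x r :
  cyclic_quot N N' x -> N (r *: x) -> ann_quot N N' r.
Proof.
move=> [_ genx] Nrx m /genx[s Ns]; rewrite -(subrK (s *: x) m) scalerDr.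
by rewrite scalerA mulrC -scalerA; apply: submodD; apply: submodZ.
Qed.

End Submodule.

Section TensorEval.
Variables (R : comPzRingType) (M A : lmodType R) (N : M -> Prop).
Variables (G : zmodType) (phi : M * A -> G) (P : G -> Prop).
Hypotheses (P0 : P 0) (PD : forall u v, P u -> P v -> P (u + v)).
Hypothesis PMz : forall u k, P u -> P (u *~ k).

Lemma tensor_zero_eval s :
  (forall g, tgen_in N g -> P (zeval phi (tgen_expand g))) ->
  tensor_zero N s -> P (\sum_(q <- s) phi q).
Proof.
move=> Prel [gs [gsN coef_s]].
have -> : \sum_(q <- s) phi q =
    \sum_(g <- [seq (g.1, tgen_expand g.2) | g <- gs]) zeval phi g.2 *~ g.1.
  rewrite -(@zeval_lincomb _ _ phi [seq (1%Z, q) | q <- s]); last first.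
    by move=> p; rewrite coef_s big_map.
  by rewrite /zeval big_map; under [RHS]eq_bigr do rewrite mulr1z.
rewrite big_map; elim: gs gsN {coef_s} => [|g gs IH [Pg Pgs]].
  by rewrite big_nil.
by rewrite big_cons; apply: PD; [apply/PMz/Prel | apply: IH].
Qed.

End TensorEval.

Section PureDivisible.
Variables (R : comPzRingType) (M : lmodType R) (N : M -> Prop).
Hypotheses (subN : submod N) (pureN : pure N).
Variable a : R.

Let aN (v : M) := exists2 u, N u & v = a *: u.

Let subaN : submod aN := submod_scale_image subN a.

Lemma scale_pideal u m : u \in pideal a -> N m -> aN (u *: m).
Proof.
by move=> /pidealP[t ->] Nm; exists (t *: m); [apply: submodZ | rewrite scalerA].
Qed.

(** [m (x) (r + aR) |-> r m], well defined modulo [aN]. *)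
Let scale_repr (p : M * quotR a) : M := reprq p.2 *: p.1.

Lemma scale_repr_rel g :
  tgen_in N g -> aN (zeval scale_repr (tgen_expand g)).
Proof.
case: g => [m m' q|m q q'|r m q] /=;
  rewrite /zeval !big_cons big_nil /scale_repr /= ?mulr1z ?mulrN1z ?addr0.
- by move=> _; rewrite scalerDr -opprD subrr; apply: submod0.
- move=> Nm; rewrite -!scaleNr -!scalerDl; apply: scale_pideal => //.
  by rewrite -opprD; apply/piq_eqE; rewrite piqD !reprqK.
- move=> Nm; rewrite scaleqE scalerA -scaleNr -scalerDl; apply: scale_pideal => //.
  by rewrite mulrC -opprB rpredN; apply: reprq_piq.
Qed.

Lemma pure_divisible y z : N y -> y = a *: z -> exists2 u, N u & y = a *: u.
Proof.
move=> Ny yaz.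
have y1_0 : tensor_zero (fun _ => True) [:: (y, piq a 1)].
  exists [:: (1%Z, TG_scal a z (piq a 1)); ((-1)%Z, TG_addr z 0 0)]; split => //.
  move=> p; rewrite /fcoef /= !big_cons !big_nil /= ?addr0 yaz scale_piq1.
  by do 2 case: (_ == p).
have y1_0N : tensor_zero N [:: (y, piq a 1)].
  by apply: pureN y1_0 => q; rewrite inE => /eqP ->.
have := tensor_zero_eval (submod0 subaN) (submodD subaN) (fun u k => submodMz subaN k)
  scale_repr_rel y1_0N.
rewrite big_seq1 /scale_repr /= => aNy.
have -> : y = reprq (piq a 1) *: y - (reprq (piq a 1) - 1) *: y.
  by rewrite scalerBl scale1r opprB addrC subrK.
apply: (submodD subaN aNy); apply: (submodN subaN); apply: scale_pideal Ny.
exact: reprq_piq.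
Qed.

End PureDivisible.

Section PureCompositionSeries.
Variables (R : comPzRingType) (M : lmodType R) (n : nat).
Variables (Ms : nat -> M -> Prop) (x : nat -> M).
Hypothesis series : pure_comp_series Ms n.
Hypothesis cyclic : forall i, (1 <= i <= n)%N -> cyclic_quot (Ms i.-1) (Ms i) (x i).

Lemma series_submod k : (k <= n)%N -> submod (Ms k).
Proof. by case: series => _ _ _ /[apply] -[]. Qed.

Lemma series_pure k : (k <= n)%N -> pure (Ms k).
Proof. by case: series => _ _ _ /[apply] -[]. Qed.

Lemma series_mono i j m : (i <= j)%N -> (j <= n)%N -> Ms i m -> Ms j m.
Proof.
case: series => _ _ step _; elim: j => [|j IH]; first by rewrite leqn0 => /eqP ->.
rewrite leq_eqVlt => /orP[/eqP -> // | ij] jn Msi.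
by apply: step => //; apply: IH => //; apply: ltnW.
Qed.

Lemma series_sum_in k (r : nat -> R) :
  (k <= n)%N -> Ms k (\sum_(1 <= i < k.+1) r i *: x i).
Proof.
move=> kn; have subk := series_submod kn.
rewrite big_nat; apply: (big_ind (Ms k)) => [|u v|i /andP[i1]]; last rewrite ltnS => ik.
- exact: submod0.
- exact: submodD.
have i_n : (1 <= i <= n)%N by rewrite i1 (leq_trans ik kn).
by apply/(submodZ subk)/(series_mono ik kn); case: (cyclic i_n).
Qed.

Lemma series_span k m : (k <= n)%N -> Ms k m ->
  exists r : nat -> R, m = \sum_(1 <= i < k.+1) r i *: x i.
Proof.
case: series => Ms0 _ _ _; elim: k m => [m _ /Ms0 ->|k IH m kn Mskm].
  by exists (fun=> 0); rewrite big_geq.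
have [_ /(_ m Mskm) [s Msk_ms]] := cyclic (i := k.+1) kn.
have [r m_sr] := IH _ (ltnW kn) Msk_ms.
exists (fun i => if i == k.+1 then s else r i).
rewrite big_nat_recr //= eqxx -(subrK (s *: x k.+1) m) m_sr; congr (_ + _).
by apply: eq_big_nat => i /andP[_ ik]; rewrite ltn_eqF.
Qed.

Lemma series_relation_reduce k (c : nat -> R) : (k < n)%N ->
  \sum_(1 <= i < k.+2) c i *: x i = 0 ->
  ann_quot (Ms k) (Ms k.+1) (c k.+1) /\
  exists r : nat -> R, \sum_(1 <= i < k.+1) (c i + c k.+1 * r i) *: x i = 0.
Proof.
move=> kn; rewrite big_nat_recr //= => rel.
have subk := series_submod (ltnW kn).
have top_in : Ms k (c k.+1 *: x k.+1).
  move/eqP: rel; rewrite addrC addr_eq0 => /eqP ->.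
  exact/(submodN subk)/series_sum_in/ltnW.
split; first exact: cyclic_quot_ann (cyclic (i := k.+1) kn) top_in.
have [u Msku top_u] := pure_divisible subk (series_pure (ltnW kn)) top_in erefl.
have [r u_r] := series_span (ltnW kn) Msku.
exists r; under eq_bigr do rewrite scalerDl -scalerA.
by rewrite big_split /= -scaler_sumr -u_r -top_u.
Qed.

Hypothesis ann_mono : forall i j, (1 <= i)%N -> (i <= j)%N -> (j <= n)%N ->
  forall r, ann_quot (Ms i.-1) (Ms i) r -> ann_quot (Ms j.-1) (Ms j) r.

Lemma series_relation_ann k (c : nat -> R) : (k <= n)%N ->
  \sum_(1 <= i < k.+1) c i *: x i = 0 ->
  forall i, (1 <= i <= k)%N -> ann_quot (Ms k.-1) (Ms k) (c i).
Proof.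
elim: k c => [c _ _ [|i] //|k IH c kn rel i].
have [ann_top [r rel_r]] := series_relation_reduce kn rel.
have [_ annD annM] := ann_quot_ideal (series_submod (ltnW kn)) (Ms k.+1).
case: (eqVneq i k.+1) => [-> // | ne] /andP[i1 ik1].
have ik : (i <= k)%N by rewrite -ltnS ltn_neqAle ne.
have ann_ir := IH _ (ltnW kn) rel_r i (introT andP (conj i1 ik)).
have {}ann_ir := ann_mono (leq_trans i1 ik) (leqnSn k) kn ann_ir.
have -> : c i = (c i + c k.+1 * r i) + (- r i) * c k.+1.
  by rewrite mulNr mulrC addrK.
by apply: annD; [apply: ann_ir | apply: annM].
Qed.

End PureCompositionSeries.

Theorem lemma3p2 (R : comPzRingType) (M : lmodType R) (n : nat)
    (Ms : nat -> M -> Prop) (x : nat -> M) (c : nat -> R) :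
  arithmetic R ->
  fin_gen M ->
  pure_comp_series Ms n ->
  (forall i, (1 <= i <= n)%N -> cyclic_quot (Ms i.-1) (Ms i) (x i)) ->
  (forall i j, (1 <= i)%N -> (i <= j)%N -> (j <= n)%N ->
     forall r, ann_quot (Ms i.-1) (Ms i) r -> ann_quot (Ms j.-1) (Ms j) r) ->
  \sum_(1 <= i < n.+1) c i *: x i = 0 ->
  forall i, (1 <= i <= n)%N -> ann_quot (Ms n.-1) (Ms n) (c i).
Proof.
move=> _ _ series cyclic ann_mono rel.
exact: series_relation_ann series cyclic ann_mono n c (leqnn n) rel.
Qed.
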